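(* Let $\mathcal A$ be a linearly ordered $\mathbf{UL}_\omega$-algebra. Let $B\subseteq A$ be finite with $\{e,f,\bot,\top\}\subseteq B$, and let $D$ be as described in the context. Then $D$ is finite.
   Context: A $\mathbf{UL}$-algebra is a structure $\langle A,\wedge,\vee,\cdot,\to,e,f,\bot,\top\rangle$ such that: - it is a bounded lattice; - $\langle A,\cdot,e\rangle$ is a commutative monoid; - $xy\le z$ iff $y\le x\to z$; - for all $x,y,u,v$: $\lambda_u((x\vee y)\to x)\vee\lambda_v((x\vee y)\to y)=e$, where $\lambda_a(b)=(a\to ba)\wedge e$. A $\mathbf{UL}_\omega$-algebra additionally satisfies $x\to e=x^2\to e$ for all $x$. This class includes $\mathbf{IUL}_\omega$-algebras. Construction. $M$ is the submonoid of $\langle A,\cdot,e\rangle$ generated by $B$. For $a\in M$ and $b\in B$, put $(a\mapsto b]=\{c\in M:ac\le b\}$. Let $\bar D=\{(a\mapsto b]:a\in M,b\in B\}$ and $D=\{\bigcap\chi:\chi\subseteq\bar D\}$, with the empty intersection equal to $M$. *)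

From mathcomp Require Import all_boot.
From mathcomp Require Import boolp classical_sets cardinality.
Set Implicit Arguments. Unset Strict Implicit. Unset Printing Implicit Defensive.
Local Open Scope classical_set_scope.

Record ULsig := {
  car :> Type;
  meet : car -> car -> car;
  join : car -> car -> car;
  mul  : car -> car -> car;
  imp  : car -> car -> car;
  unit_e : car;
  const_f : car;
  bot : car;
  top : car }.

Section Defs.
Variable A : ULsig.

Definition leA (x y : A) : Prop := meet x y = x.

Definition lambda (a b : A) : A := meet (imp a (mul b a)) (unit_e A).

Definition is_UL_algebra : Prop :=
  (forall x y z : A, meet x (meet y z) = meet (meet x y) z) /\
  (forall x y z : A, join x (join y z) = join (join x y) z) /\
  (forall x y : A, meet x y = meet y x) /\
  (forall x y : A, join x y = join y x) /\
  (forall x y : A, meet x (join x y) = x) /\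
  (forall x y : A, join x (meet x y) = x) /\
  (forall x : A, leA (bot A) x) /\
  (forall x : A, leA x (top A)) /\
  (forall x y z : A, mul x (mul y z) = mul (mul x y) z) /\
  (forall x y : A, mul x y = mul y x) /\
  (forall x : A, mul (unit_e A) x = x) /\
  (forall x y z : A, leA (mul x y) z <-> leA y (imp x z)) /\
  (forall x y u v : A,
     join (lambda u (imp (join x y) x)) (lambda v (imp (join x y) y)) = unit_e A).

Definition is_ULomega_algebra : Prop :=
  is_UL_algebra /\
  forall x : A, imp x (unit_e A) = imp (mul x x) (unit_e A).

Definition linearly_ordered : Prop := forall x y : A, leA x y \/ leA y x.

Inductive gen_monoid (B : set A) : A -> Prop :=
  | gm_unit : gen_monoid B (unit_e A)
  | gm_base b : B b -> gen_monoid B b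
  | gm_mul x y : gen_monoid B x -> gen_monoid B y -> gen_monoid B (mul x y).

Definition Mset (B : set A) : set A := [set x | gen_monoid B x].

(* (a |-> b] = {c in M : a c <= b} *)
Definition arr (B : set A) (a b : A) : set A :=
  [set c | Mset B c /\ leA (mul a c) b].

Definition Dbar (B : set A) : set (set A) :=
  [set X | exists a b, Mset B a /\ B b /\ X = arr B a b].

(* intersection of chi, with empty intersection equal to M *)
Definition bigcapM (B : set A) (chi : set (set A)) : set A :=
  [set c | Mset B c /\ forall Y, chi Y -> Y c].

Definition Dset (B : set A) : set (set A) :=
  [set X | exists chi, chi `<=` Dbar B /\ X = bigcapM B chi].

End Defs.

(* Enumerate B as g_1, ..., g_k; by commutativity every element of M is a
   monomial g^x = g_1^(x_1) ... g_k^(x_k).  The UL_omega identity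
   x -> e = x^2 -> e gives x^(n+1) y <= e iff x y <= e, so whether g^d <= e
   depends only on the support of d, and by linearity g^d <= e or e <= g^d.
   Hence T_b = {x | g^x <= b} is never both left along one step u <= v and
   entered along another step u' <= v' with the same support.  For such a set
   the translates {z | x + z in T_b} are finitely many: from infinitely many
   distinct ones, Dickson's lemma and the pigeonhole principle extract three
   increasing pairs (x_j, y_j) with a common difference support and
   componentwise increasing witnesses z_j separating x_j from y_j in the same
   direction, and the outer pairs yield a forbidden exit/entry of T_b.  As
   (g^x |-> b] is the image of such a translate, D-bar is finite, and D is an
   image of its powerset. *)

From HB Require Import structures.
From Pilot Require Import Defs.
From mathcomp Require Import all_boot.
From mathcomp Require Import boolp classical_sets cardinality.
From mathcomp Require Import zify.
Set Implicit Arguments. Unset Strict Implicit. Unset Printing Implicit Defensive.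
Local Open Scope classical_set_scope.

Lemma frequent_subseq (P : nat -> Prop) :
  (forall N, exists2 n, N <= n & P n) ->
  exists2 phi : nat -> nat, {homo phi : m n / m < n} & forall n, P (phi n).
Proof.
move=> freqP; have /choice[g gP] : forall N, exists n, N <= n /\ P n.
  by move=> N; have [n] := freqP N; exists n.
pose phi := fix phi n := if n is m.+1 then g (phi m).+1 else g 0.
exists phi; last by case=> [|n]; [case: (gP 0) | case: (gP (phi n).+1)].
apply: (@homo_ltn _ phi (fun m n => m < n) ltn_trans) => n.
by have [] := gP (phi n).+1.
Qed.

Lemma incr_leq (phi : nat -> nat) :
  {homo phi : m n / m < n} -> {homo phi : m n / m <= n}.
Proof. by move=> phi_incr m n; rewrite leq_eqVlt => /predU1P[->|/phi_incr/ltnW]. Qed.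

Lemma nondecreasing_subseq (f : nat -> nat) :
  exists2 phi : nat -> nat, {homo phi : m n / m < n} & {homo f \o phi : m n / m <= n}.
Proof.
have [|phi phi_incr phi_min] :=
  @frequent_subseq (fun n => forall m, n <= m -> f n <= f m).
  move=> N; pose Q v := `[< exists2 n, N <= n & f n = v >].
  have exQ : exists v, Q v by exists (f N); apply/asboolP; exists N.
  case: (ex_minnP exQ) => v /asboolP[n Nn <-] v_min.
  by exists n => // m nm; apply/v_min/asboolP; exists m => //; apply: leq_trans nm.
exists phi => //; apply: (@homo_leq _ (f \o phi) leq leqnn leq_trans) => n /=.
by apply: phi_min; apply/ltnW/phi_incr.
Qed.

Lemma infinite_pigeonhole (T : finType) (c : nat -> T) :
  exists t, forall N, exists2 n, N <= n & c n = t.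
Proof.
apply: contrapT => /forallNP rare.
have /choice[bound boundP] : forall t, exists N, ~ exists2 n, N <= n & c n = t.
  by move=> t; apply/existsNP/rare.
pose N := \max_t bound t.
by apply: (boundP (c N)); exists N => //; apply: leq_bigmax.
Qed.

Lemma pigeonhole_subseq (T : finType) (c : nat -> T) :
  exists t, exists2 phi : nat -> nat, {homo phi : m n / m < n} & forall n, c (phi n) = t.
Proof. by have [t /frequent_subseq] := infinite_pigeonhole c; exists t. Qed.

Section Vectors.
Variable I : finType.
Implicit Types x y z : I -> nat.

Definition vle x y := forall i, x i <= y i.

Lemma dickson (s : nat -> I -> nat) :
  exists2 phi : nat -> nat,
    {homo phi : m n / m < n} & {homo s \o phi : m n / m <= n >-> vle m n}.
Proof.
suff [phi phi_incr phi_mono] : exists2 phi : nat -> nat, {homo phi : m n / m < n} &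
    forall i, i \in enum I -> {homo (fun n => s (phi n) i) : m n / m <= n}.
  by exists phi => // m n mn i; apply: phi_mono; rewrite ?mem_enum.
elim: (enum I) => [|i l [phi phi_incr phi_mono]]; first by exists id.
have [psi psi_incr psi_mono] := nondecreasing_subseq (fun n => s (phi n) i).
exists (phi \o psi) => [m n mn|j]; first by apply/phi_incr/psi_incr.
rewrite inE => /predU1P[->|jl] m n mn; first exact: psi_mono.
by apply: phi_mono => //; apply: incr_leq.
Qed.

Definition vadd x y : I -> nat := fun i => x i + y i.
Definition vsub y x : I -> nat := fun i => y i - x i.
Definition supp x : {set I} := [set i | 0 < x i].
Definition shift (T : set (I -> nat)) x : set (I -> nat) := [set z | T (vadd x z)].

Definition supp_coherent (T : set (I -> nat)) :=
  forall u v u' v', vle u v -> vle u' v' -> supp (vsub v u) = supp (vsub v' u') ->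
  T u -> ~ T v -> T v' -> T u'.

Lemma interleave x1 y1 x2 y2 x3 y3 z z' :
  vle x1 y1 -> vle y1 x2 -> vle x2 y2 -> vle y2 x3 -> vle x3 y3 -> vle z z' ->
  supp (vsub y1 x1) = supp (vsub y2 x2) -> supp (vsub y2 x2) = supp (vsub y3 x3) ->
  [/\ vle (vadd x1 z) (vadd y3 z'), vle (vadd y1 z) (vadd x3 z') &
      supp (vsub (vadd y3 z') (vadd x1 z)) = supp (vsub (vadd x3 z') (vadd y1 z))].
Proof.
move=> le1 le12 le2 le23 le3 lez /setP S12 /setP S23.
split=> [i|i|]; last apply/setP => i;
  move: (le1 i) (le12 i) (le2 i) (le23 i) (le3 i) (lez i) (S12 i) (S23 i);
  rewrite !inE /vsub /vadd; lia.
Qed.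

Lemma coherent_interleave T x1 y1 x2 y2 x3 y3 z z' : supp_coherent T ->
  vle x1 y1 -> vle y1 x2 -> vle x2 y2 -> vle y2 x3 -> vle x3 y3 -> vle z z' ->
  supp (vsub y1 x1) = supp (vsub y2 x2) -> supp (vsub y2 x2) = supp (vsub y3 x3) ->
  (T (vadd x1 z) <-> T (vadd x3 z')) ->
  ~ (T (vadd x1 z) <-> T (vadd y1 z)) -> ~ (T (vadd x3 z') <-> T (vadd y3 z')) -> False.
Proof.
move=> cohT le1 le12 le2 le23 le3 lez S12 S23 same sep1 sep3.
have [le13 le31 S] := interleave le1 le12 le2 le23 le3 lez S12 S23.
have [T1|nT1] := EM (T (vadd x1 z)).
- have T3 : T (vadd x3 z') by apply/same.
  have nTy1 : ~ T (vadd y1 z) by move=> Ty1; apply: sep1.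
  have nTy3 : ~ T (vadd y3 z') by move=> Ty3; apply: sep3.
  exact/nTy1/(cohT _ _ _ _ le13 le31 S).
- have nT3 : ~ T (vadd x3 z') by move/same.
  have Ty1 : T (vadd y1 z) by apply: contrapT => nTy1; apply: sep1.
  have Ty3 : T (vadd y3 z') by apply: contrapT => nTy3; apply: sep3.
  exact/nT1/(cohT _ _ _ _ le31 le13 (esym S)).
Qed.

Lemma infinite_range_inj (U : Type) (V : pointedType) (f : U -> V) :
  infinite_set (range f) -> exists w : nat -> U, injective (f \o w).
Proof.
move=> /infiniteP/pcard_leP/injfunPex[h hP h_inj].
have /choice[w wP] : forall n, exists u, f u = h n.
  by move=> n; have [u] := hP n Logic.I; exists u.
by exists w => m n /=; rewrite !wP => /h_inj; apply; rewrite inE.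
Qed.

Theorem finite_shifts T : supp_coherent T -> finite_set (range (shift T)).
Proof.
move=> cohT; apply: contrapT => /infinite_range_inj[w w_inj].
have [phi phi_incr phi_mono] := dickson w.
pose X n := w (phi n.*2); pose Y n := w (phi n.*2.+1).
have le_XY a : vle (X a) (Y a) by apply: phi_mono.
have le_YX a b : a < b -> vle (Y a) (X b) by move=> ab; apply: phi_mono; rewrite ltn_double.
have /choice[z zP] : forall n, exists z, ~ (T (vadd (X n) z) <-> T (vadd (Y n) z)).
  move=> n; apply: contrapT => /forallNP same.
  have /w_inj E : shift T (X n) = shift T (Y n).
    by apply/seteqP; split=> u /(contrapT (same u)).
  by have := phi_incr _ _ (ltnSn n.*2); rewrite E ltnn.
pose col n := (`[< T (vadd (X n) (z n)) >], supp (vsub (Y n) (X n))).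
have [[t S] [psi psi_incr psi_col]] := pigeonhole_subseq col.
have [chi chi_incr chi_mono] := dickson (z \o psi).
pose n j := psi (chi j).
have n_incr a b : a < b -> n a < n b by move=> ab; apply/psi_incr/chi_incr.
have S_n j : supp (vsub (Y (n j)) (X (n j))) = S by case: (psi_col (chi j)).
have t_n j : `[< T (vadd (X (n j)) (z (n j))) >] = t by case: (psi_col (chi j)).
apply: (coherent_interleave cohT (le_XY (n 0)) (le_YX _ _ (n_incr 0 1 isT)) (le_XY (n 1))
  (le_YX _ _ (n_incr 1 2 isT)) (le_XY (n 2)) (chi_mono 0 2 isT)) (zP (n 0)) (zP (n 2)).
- by rewrite !S_n.
- by rewrite !S_n.
- by apply: asbool_eq_equiv; rewrite !t_n.
Qed.

End Vectors.

Section ULomegaAlgebra.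
Variable A : ULsig.
Hypothesis HU : is_ULomega_algebra A.
Hypothesis HL : linearly_ordered A.
Local Notation e := (unit_e A).
Local Notation "x ⊙ y" := (@Defs.mul A x y) (at level 40, left associativity).
Local Notation "x ≤ y" := (leA x y) (at level 70).

Lemma meetUA : associative (@Defs.meet A).
Proof. by case: HU => [[H _] _]. Qed.
Lemma meet_absorb (x y : A) : Defs.meet x (Defs.join x y) = x.
Proof. by case: HU => [[_ [_ [_ [_ [H _]]]]] _]. Qed.
Lemma join_absorb (x y : A) : Defs.join x (Defs.meet x y) = x.
Proof. by case: HU => [[_ [_ [_ [_ [_ [H _]]]]]] _]. Qed.
Lemma mulUA : associative (@Defs.mul A).
Proof. by case: HU => [[_ [_ [_ [_ [_ [_ [_ [_ [H _]]]]]]]]] _]. Qed.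
Lemma mulUC : commutative (@Defs.mul A).
Proof. by case: HU => [[_ [_ [_ [_ [_ [_ [_ [_ [_ [H _]]]]]]]]]] _]. Qed.
Lemma mul1U : left_id e (@Defs.mul A).
Proof. by case: HU => [[_ [_ [_ [_ [_ [_ [_ [_ [_ [_ [H _]]]]]]]]]]] _]. Qed.
Lemma mulU1 : right_id e (@Defs.mul A).
Proof. by move=> x; rewrite mulUC mul1U. Qed.
Lemma residU (x y z : A) : x ⊙ y ≤ z <-> y ≤ Defs.imp x z.
Proof. by case: HU => [[_ [_ [_ [_ [_ [_ [_ [_ [_ [_ [_ [H _]]]]]]]]]]]] _]. Qed.
Lemma impU_sqr (x : A) : Defs.imp x e = Defs.imp (x ⊙ x) e.
Proof. by case: HU. Qed.

HB.instance Definition _ := Monoid.isComLaw.Build A e (@Defs.mul A) mulUA mulUC mul1U.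

Lemma leU_refl (x : A) : x ≤ x.
Proof. by rewrite /leA -{2}(join_absorb x x) meet_absorb. Qed.
Lemma leU_trans (x y z : A) : x ≤ y -> y ≤ z -> x ≤ z.
Proof. by rewrite /leA => xy yz; rewrite -xy -meetUA yz. Qed.
Lemma leU_mul2l (x y z : A) : x ≤ y -> z ⊙ x ≤ z ⊙ y.
Proof. by move=> xy; apply/residU/(leU_trans xy)/residU/leU_refl. Qed.

Lemma sqr_mul_le1 (x y : A) : (x ⊙ x) ⊙ y ≤ e <-> x ⊙ y ≤ e.
Proof. by split=> /residU xy; apply/residU; [rewrite impU_sqr | rewrite -impU_sqr]. Qed.

Definition powU (x : A) n := iter n (@Defs.mul A x) e.

Lemma powUD x m n : powU x (m + n) = powU x m ⊙ powU x n.
Proof. by elim: m => [|m IHm]; rewrite /= ?mul1U // -mulUA -IHm. Qed.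

Lemma powU1 x : powU x 1 = x.
Proof. exact: mulU1. Qed.

Lemma powUS_le1 x n y : powU x n.+1 ⊙ y ≤ e <-> x ⊙ y ≤ e.
Proof.
elim: n => [|n IHn]; first by rewrite /= mulU1.
by rewrite -IHn /= -!mulUA mulUA; apply: sqr_mul_le1.
Qed.

Lemma powU_le1_supp x m n y :
  (0 < m) = (0 < n) -> powU x m ⊙ y ≤ e <-> powU x n ⊙ y ≤ e.
Proof. by case: m n => [|m] [|n] //= _; rewrite ?powUS_le1. Qed.

Section Monomials.
Variables (I : finType) (g : I -> A).

Definition monom (x : I -> nat) : A := \big[@Defs.mul A/e]_i powU (g i) (x i).

Lemma monomD x y : monom (vadd x y) = monom x ⊙ monom y.
Proof. by rewrite -big_split; apply: eq_bigr => i _; rewrite powUD. Qed.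

Lemma monom_split u v : vle u v -> monom v = monom u ⊙ monom (vsub v u).
Proof.
by move=> uv; rewrite -monomD; congr monom; apply/funext => i; rewrite /vadd subnKC.
Qed.

Lemma monom_supp_le1 x y c : supp x = supp y -> monom x ⊙ c ≤ e <-> monom y ⊙ c ≤ e.
Proof.
move=> /setP sxy; rewrite /monom; move: c.
apply: (big_rec2 (fun a b => forall c, a ⊙ c ≤ e <-> b ⊙ c ≤ e)) => [//|i a b _ IH] c.
have swap q d : (q ⊙ d) ⊙ c = d ⊙ (q ⊙ c) by rewrite (mulUC q) -mulUA.
rewrite !swap IH !(mulUC b) -!mulUA; apply: powU_le1_supp.
by have := sxy i; rewrite !inE.
Qed.

Lemma monom_le_coherent b : supp_coherent [set x | monom x ≤ b].
Proof.
move=> u v u' v' uv uv' S /= Tu nTv Tv'.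
have dN : ~ monom (vsub v u) ≤ e.
  move=> d1; apply: nTv; rewrite (monom_split uv); apply: leU_trans Tu.
  by rewrite -{2}(mulU1 (monom u)); apply: leU_mul2l.
have d'P : e ≤ monom (vsub v' u').
  have [d'1|//] := HL (monom (vsub v' u')) e; exfalso; apply: dN.
  by have /(monom_supp_le1 e) := S; rewrite !mulU1 => ->.
apply: leU_trans Tv'; rewrite (monom_split uv') -{1}(mulU1 (monom u')).
exact: leU_mul2l.
Qed.

Variable B : set A.
Hypothesis gB : B = range g.

Lemma Mset_monom : Mset B = range monom.
Proof.
apply/seteqP; split=> [a /=|_ [x _ <-]].
- elim=> [|b|a1 a2 _ [x1 _ <-] _ [x2 _ <-]].
  + by exists (fun _ => 0) => //; rewrite /monom big1.
  + rewrite gB => -[i _ <-]; exists (fun j => nat_of_bool (j == i)) => //.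
    by rewrite /monom (bigD1 i) //= eqxx powU1 big1 ?mulU1 // => j /negbTE ->.
  + by exists (vadd x1 x2) => //; rewrite monomD.
- apply: big_ind => [||i _]; [exact: gm_unit | exact: gm_mul |].
  elim: (x i) => [|n IHn]; first exact: gm_unit.
  by apply: gm_mul IHn; apply: gm_base; rewrite gB; exists i.
Qed.

Lemma arr_monom x b : arr B (monom x) b = monom @` shift [set y | monom y ≤ b] x.
Proof.
rewrite /arr Mset_monom; apply/seteqP; split=> [_ [[z _ <-] xz]|_ [z xz <-]].
  by exists z => //; rewrite /shift /= monomD.
by split; [exists z | rewrite -monomD].
Qed.

Lemma finite_arr b : finite_set [set arr B a b | a in Mset B].
Proof.
have shifts_fin := finite_shifts (@monom_le_coherent b).
apply: sub_finite_set (finite_image (fun S => monom @` S) shifts_fin).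
rewrite Mset_monom => _ [_ [x _ <-] <-].
by exists (shift [set y | monom y ≤ b] x); [exists x | rewrite arr_monom].
Qed.

End Monomials.

End ULomegaAlgebra.

Lemma finite_subsets (T : Type) (X : set T) :
  finite_set X -> finite_set [set Y | Y `<=` X].
Proof.
move=> /(@finite_seqP {classic T})[s ->].
pose subset_of (m : (size s).-tuple bool) := [set` mask m s].
apply: (sub_finite_set _ (@finite_image _ _ setT subset_of finite_finset)).
move=> Y sY; exists (map_tuple (fun y => `[< Y y >]) (in_tuple s)) => //.
apply/seteqP; split=> y;
  rewrite /subset_of /= -[mask _ s]/(mask (map _ s) s) -filter_mask mem_filter.
  by move=> /andP[/asboolP].
by move=> Yy; rewrite (asboolT Yy); apply: sY.
Qed.

Theorem lemma4p8 (A : ULsig) (B : set A) :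
  is_ULomega_algebra A -> linearly_ordered A ->
  finite_set B ->
  [set unit_e A; const_f A; bot A; top A] `<=` B ->
  finite_set (Dset B).
Proof.
move=> HU HL Bfin _.
have [gs gsB] := (@finite_seqP {classic A} B).1 Bfin.
pose g := tnth (in_tuple gs).
have gB : B = range g.
  rewrite gsB; apply/seteqP; split=> [x /= /(tnthP (in_tuple gs))[i ->]|_ [i _ <-]].
    by exists i.
  exact: mem_tnth.
have Dbar_fin : finite_set (Dbar B).
  apply: (sub_finite_set _ (bigcup_finite Bfin (fun b _ => finite_arr HU HL gB b))).
  by move=> _ [a [b [Ma [Bb ->]]]]; exists b => //; exists a.
apply: (sub_finite_set _ (finite_image (bigcapM B) (finite_subsets Dbar_fin))).
by move=> _ [chi [chiD ->]]; exists chi.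
Qed.
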